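(* Let $F:\mathbb{R}^d\to\mathbb{R}^d$ be smooth and consider $\dot{x}=F(x)$. Each of the two schemes $$x_{n+1}=x_n+\big(1-e^{-h_nF'(x_n)}\big)\big(F'(x_n)\big)^{-1}F(x_{n+1})$$ and $$x_{n+1}=x_n+\big(1-e^{-h_nF'(x_{n+1})}\big)\big(F'(x_{n+1})\big)^{-1}F(x_{n+1})$$ is locally exact. These are the schemes $x_{n+1}=x_n+\delta(\bar x,h_n)F(x_{n+1})$ with $\delta(\bar x,h)=\big(1-e^{-hF'(\bar x)}\big)\big(F'(\bar x)\big)^{-1}$, where $\bar x=x_n$ and $\bar x=x_{n+1}$ respectively. For every $n$, each scheme is locally exact at the corresponding point $\bar x$.
   Context: $F'(x)$ denotes the Jacobian matrix of $F$. Throughout, $F'(\bar x)$ is assumed invertible at the points $\bar x$ considered, and $1$ denotes the identity matrix. The linearization of $\dot{x}=F(x)$ around $\bar x$ is $\dot\xi=F'(\bar x)\xi+F(\bar x)$ with $\xi=x-\bar x$. Its exact discretization with step $h_n$ is $$\xi_{n+1}=e^{h_nF'(\bar x)}\xi_n+\big(e^{h_nF'(\bar x)}-1\big)F'(\bar x)^{-1}F(\bar x).$$ Consider a scheme $x_{n+1}-x_n=\delta(\bar x,h_n)\,\Psi(x_n,x_{n+1})$ in which the matrix $\delta$ depends only on $\bar x$ and $h_n$. Its linearization at $\bar x$ is obtained as follows: - substitute $x_n=\bar x+\xi_n$ and $x_{n+1}=\bar x+\xi_{n+1}$; - keep $\delta(\bar x,h_n)$ fixed; - retain only terms up to first order in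 $\xi_n,\xi_{n+1}$. The scheme is locally exact at $\bar x$ if this linear relation coincides with the exact discretization above, viewed as a relation determining $\xi_{n+1}$ from $\xi_n$. It is locally exact if there is a sequence $\bar x_n$ with $\bar x_n-x_n=O(h_n)$ such that, for every $n$, the scheme is locally exact at $\bar x_n$. *)

From HB Require Import structures.
From mathcomp Require Import all_boot all_order all_algebra.
From mathcomp Require Import all_classical all_reals all_analysis.
Set Implicit Arguments. Unset Strict Implicit. Unset Printing Implicit Defensive.
Import Order.TTheory GRing.Theory Num.Theory.
Import numFieldNormedType.Exports.
Local Open Scope ring_scope.

Definition expm (R : realType) (d : nat) (A : 'M[R]_d) : 'M[R]_d :=
  limn (series (fun k : nat => (k`!%:R)^-1 *: A ^+ k)).

(* Jacobian matrix F'(x): entry (i,j) = dF_i/dx_j, i.e. column j is the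
   differential of F at x applied to the j-th standard basis vector. *)
Definition Fprime (R : realType) (d : nat) (F : 'cV[R]_d -> 'cV[R]_d)
  (x : 'cV[R]_d) : 'M[R]_d :=
  \matrix_(i < d, j < d) ('d F x (delta_mx j 0 : 'cV[R]_d)) i 0.

(* Linearization at xbar of the scheme  x_{n+1} - x_n = delta(xbar,h) Psi(x_n,x_{n+1}):
   substitute x_n = xbar + xi, x_{n+1} = xbar + xi', keep delta(xbar,h) fixed and
   keep terms up to first order in (xi, xi'):
     xi' - xi = delta(xbar,h) (Psi(xbar,xbar) + dPsi_(xbar,xbar)(xi, xi')). *)
Definition lin_scheme (R : realType) (d : nat)
  (Psi : 'cV[R]_d * 'cV[R]_d -> 'cV[R]_d)
  (delta : 'cV[R]_d -> R -> 'M[R]_d) (xbar : 'cV[R]_d) (h : R)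
  (xi xi' : 'cV[R]_d) : Prop :=
  xi' - xi = delta xbar h *m (Psi (xbar, xbar) + 'd Psi (xbar, xbar) (xi, xi')).

(* Exact discretization, with step h, of the linearization of x' = F(x) at xbar:
     xi' = e^{h F'(xbar)} xi + (e^{h F'(xbar)} - 1) F'(xbar)^{-1} F(xbar). *)
Definition exact_disc (R : realType) (d : nat) (F : 'cV[R]_d -> 'cV[R]_d)
  (xbar : 'cV[R]_d) (h : R) (xi : 'cV[R]_d) : 'cV[R]_d :=
  expm (h *: Fprime F xbar) *m xi
  + (expm (h *: Fprime F xbar) - 1%:M) *m invmx (Fprime F xbar) *m F xbar.

Definition locally_exact_at (R : realType) (d : nat) (F : 'cV[R]_d -> 'cV[R]_d)
  (Psi : 'cV[R]_d * 'cV[R]_d -> 'cV[R]_d)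
  (delta : 'cV[R]_d -> R -> 'M[R]_d) (xbar : 'cV[R]_d) (h : R) : Prop :=
  forall xi xi' : 'cV[R]_d,
    lin_scheme Psi delta xbar h xi xi' <-> xi' = exact_disc F xbar h xi.

Definition delta_exp (R : realType) (d : nat) (F : 'cV[R]_d -> 'cV[R]_d)
  (xbar : 'cV[R]_d) (h : R) : 'M[R]_d :=
  (1%:M - expm ((- h) *: Fprime F xbar)) *m invmx (Fprime F xbar).

(* Linearizing the scheme at xbar, with delta(xbar, h) frozen and
   Psi(x, y) = F(y), gives xi' - xi = (1 - e^{-hJ}) J^{-1} (F(xbar) + J xi')
   with J = F'(xbar).
   As e^{hJ} and e^{-hJ} are mutually inverse, multiplying by e^{hJ} turns this
   into the exact discretization xi' = e^{hJ} xi + (e^{hJ} - 1) J^{-1} F(xbar).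
   The inverse property comes from the Cauchy product of the two exponential
   series: its deviation from the series of e^{0} is dominated entrywise by the
   same deviation for scalar series, which vanishes since
   expR a * expR b = expR (a + b). *)

From HB Require Import structures.
From mathcomp Require Import all_boot all_order all_algebra.
From mathcomp Require Import all_classical all_reals all_analysis.
From mathcomp Require Import ring.
Import Order.TTheory GRing.Theory Num.Theory.
Import numFieldNormedType.Exports.
Set Implicit Arguments. Unset Strict Implicit. Unset Printing Implicit Defensive.
Local Open Scope classical_set_scope.
Local Open Scope ring_scope.

Section ExpSeries.
Variables (R : numFieldType) (V : algType R).
Implicit Types x y : V.

Definition exp_series x : V ^nat := series (fun k => (k`!%:R)^-1 *: x ^+ k).

Definition exp_cauchy_term x y (i j : nat) : V :=
  ((i`!%:R : R)^-1 * (j`!%:R)^-1) *: (x ^+ i * y ^+ j).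

(* Terms of the Cauchy product of [exp_series x] and [exp_series y] lying
   outside the triangle [i + j < N]. *)
Definition exp_remainder x y N : V :=
  \sum_(0 <= i < N) \sum_(N - i <= j < N) exp_cauchy_term x y i j.

Lemma exp_termD_comm x y N : GRing.comm x y ->
  (N`!%:R : R)^-1 *: (x + y) ^+ N =
    \sum_(0 <= i < N.+1) exp_cauchy_term x y i (N - i).
Proof.
move=> cxy; rewrite addrC exprDn_comm; last exact/commr_sym.
rewrite scaler_sumr big_mkord; apply: eq_bigr => -[i /=]; rewrite ltnS => iN _.
have cyx : GRing.comm (y ^+ (N - i)) (x ^+ i).
  exact/commrX/commr_sym/commrX.
rewrite /exp_cauchy_term -[_ * _ *+ _](@scaler_nat R) scalerA cyx; congr (_ *: _).
have fact_neq0 k : (k`!%:R : R) != 0 by rewrite pnatr_eq0 -lt0n fact_gt0.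
have bin_neq0 : ('C(N, i)%:R : R) != 0 by rewrite pnatr_eq0 -lt0n bin_gt0.
rewrite -(bin_fact iN) !natrM; field.
by rewrite !fact_neq0 bin_neq0.
Qed.

Lemma exp_seriesD_comm x y N : GRing.comm x y ->
  exp_series (x + y) N =
    \sum_(0 <= i < N) \sum_(0 <= j < N - i) exp_cauchy_term x y i j.
Proof.
move=> cxy; rewrite /exp_series seriesEnat /=.
elim: N => [|N IH]; first by rewrite !big_geq.
rewrite big_nat_recr //= IH exp_termD_comm //.
rewrite [RHS](eq_big_nat _ _ (F2 := fun i =>
  \sum_(0 <= j < N - i) exp_cauchy_term x y i j + exp_cauchy_term x y i (N - i)));
  last first.
  by move=> i /andP[_ iN]; rewrite subSn ?big_nat_recr.
rewrite big_split /= [in RHS]big_nat_recr //=.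
by rewrite subnn (big_geq (leqnn 0)) addr0.
Qed.

Lemma exp_series_mul_comm x y N : GRing.comm x y ->
  exp_series x N * exp_series y N = exp_series (x + y) N + exp_remainder x y N.
Proof.
move=> cxy; rewrite exp_seriesD_comm // /exp_remainder -big_split /=.
rewrite /exp_series !seriesEnat /= big_distrl /=.
apply: eq_big_nat => i /andP[_ iN].
rewrite big_distrr /= -big_cat_nat ?leq_subr //; apply: eq_bigr => j _.
by rewrite /exp_cauchy_term -scalerAl -scalerAr scalerA.
Qed.

Lemma exp_series0 N : exp_series 0 N.+1 = 1.
Proof.
rewrite /exp_series seriesEnat /= big_nat_recl // expr0 fact0 invr1 scale1r.
by rewrite big1 ?addr0 // => k _; rewrite expr0n scaler0.
Qed.

Lemma exp_series_mulN x N :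
  exp_series x N.+1 * exp_series (- x) N.+1 = 1 + exp_remainder x (- x) N.+1.
Proof.
by rewrite exp_series_mul_comm ?subrr ?exp_series0 //; exact/commrN/commr_refl.
Qed.

End ExpSeries.

Lemma exp_seriesR (R : realType) (a : R) :
  exp_series (a : R^o) = series (exp_coeff a).
Proof.
apply/funext => N; rewrite /exp_series !seriesEnat /=.
by apply: eq_bigr => k _; rewrite /exp_coeff /= mulrC.
Qed.

Lemma exp_remainderR_cvg0 (R : realType) (a b : R) :
  exp_remainder (a : R^o) b @ \oo --> 0.
Proof.
suff -> : exp_remainder (a : R^o) b =
    (fun N => series (exp_coeff a) N * series (exp_coeff b) N
              - series (exp_coeff (a + b)) N).
  rewrite -(subrr (expR (a + b))) {1}expRD.
  by apply: cvgB; [apply: cvgM|]; exact: is_cvg_series_exp_coeff.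
apply/funext => N; rewrite -!exp_seriesR exp_series_mul_comm; last exact: mulrC.
by rewrite addrAC subrr add0r.
Qed.

Section MxNorm.
Variable R : realType.

Lemma mx_norm_entry_le m p (M : 'M[R]_(m, p)) i j : `|M i j| <= `|M|.
Proof.
rewrite [leRHS]/Num.norm /= mx_normrE.
exact: (le_bigmax 0 (fun ij : 'I_m * 'I_p => `|M ij.1 ij.2|) (i, j)).
Qed.

Lemma mx_norm_le m p (M : 'M[R]_(m, p)) c : 0 <= c ->
  (forall i j, `|M i j| <= c) -> `|M| <= c.
Proof.
move=> c0 Mc; rewrite [leLHS]/Num.norm /= mx_normrE.
by apply: bigmax_le => // -[i j] _; exact: Mc.
Qed.

Lemma mx_norm_mul_le m p q (A : 'M[R]_(m, p)) (B : 'M[R]_(p, q)) :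
  `|A *m B| <= p%:R * `|A| * `|B|.
Proof.
apply: mx_norm_le; first by rewrite !mulr_ge0.
move=> i j; rewrite mxE (le_trans (ler_norm_sum _ _ _)) //.
rewrite (@le_trans _ _ (\sum_(k < p) `|A| * `|B|)) //.
  by apply: ler_sum => k _; rewrite normrM ler_pM ?mx_norm_entry_le.
by rewrite sumr_const card_ord mulr_natl mulrnAl.
Qed.

(* The max-entry norm is not submultiplicative; [n.+1 * `|A| + 1] is a
   submultiplicative bound that also dominates [`|1|]. *)
Lemma mx_norm_exp_le n (A : 'M[R]_n.+1) k :
  `|A ^+ k| <= (n.+1%:R * `|A| + 1) ^+ k.
Proof.
elim: k => [|k IH].
  rewrite expr0; apply: mx_norm_le => // i j; rewrite !mxE.
  by case: (i == j); rewrite ?normr1 ?normr0.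
rewrite exprS -mulmxE (le_trans (mx_norm_mul_le A (A ^+ k))) // exprS.
by rewrite ler_pM ?mulr_ge0 // lerDl.
Qed.

End MxNorm.

(* Exposes [mx_complete] at the level of normed modules, as [normed_cvg] needs. *)
HB.instance Definition _ (R : realType) m n :=
  Complete.copy 'M[R]_(m, n) 'M[R]_(m, n).

Lemma cvg_mulmx_entry (R : realType) m p q (u : nat -> 'M[R]_(m, p))
    (v : nat -> 'M[R]_(p, q)) (A : 'M[R]_(m, p)) (B : 'M[R]_(p, q)) i j :
  u @ \oo --> A -> v @ \oo --> B ->
  (fun N => (u N *m v N) i j) @ \oo --> (A *m B) i j.
Proof.
move=> uA vB; rewrite mxE; under eq_fun do rewrite mxE.
apply: cvg_big; first exact: add_continuous.
move=> k _; apply: cvgM.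
  exact: cvg_comp _ _ uA (@coord_continuous R _ _ i k A).
exact: cvg_comp _ _ vB (@coord_continuous R _ _ k j B).
Qed.

Section MatrixExponential.
Variables (R : realType) (n : nat).
Implicit Types A B : 'M[R]_n.+1.

Local Notation bnd A := (n.+1%:R * `|A| + 1 : R^o).

Lemma is_cvg_exp_series A : cvgn (exp_series A).
Proof.
apply: normed_cvg; apply: (@series_le_cvg R _ (exp_coeff (bnd A))).
- by move=> k; exact: normr_ge0.
- by move=> k; apply: exp_coeff_ge0; rewrite addr_ge0 ?mulr_ge0.
- move=> k; rewrite /= normrZ /exp_coeff /= mulrC ger0_norm ?invr_ge0 //.
  by rewrite ler_pM2r ?invr_gt0 ?ltr0n ?fact_gt0 // mx_norm_exp_le.
- exact: is_cvg_series_exp_coeff.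
Qed.

Lemma mx_norm_exp_remainder_le A B N :
  `|exp_remainder A B N| <= n.+1%:R * exp_remainder (bnd A) (bnd B) N.
Proof.
rewrite /exp_remainder mulr_sumr; apply: (le_trans (ler_norm_sum _ _ _)).
apply: ler_sum => i _; rewrite mulr_sumr; apply: (le_trans (ler_norm_sum _ _ _)).
apply: ler_sum => j _.
rewrite /exp_cauchy_term normrZ ger0_norm ?mulr_ge0 ?invr_ge0 //.
rewrite mulrCA ler_wpM2l ?mulr_ge0 ?invr_ge0 // -mulmxE.
apply: (le_trans (mx_norm_mul_le _ _)); rewrite -mulrA ler_wpM2l //.
by rewrite ler_pM ?mx_norm_exp_le.
Qed.

Lemma cvg_exp_seriesS A : (fun N => exp_series A N.+1) @ \oo --> expm A.
Proof. by rewrite cvg_shiftS; exact: is_cvg_exp_series. Qed.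

Lemma expm_mulN A : expm A * expm (- A) = 1.
Proof.
have prod_cvg1 :
    (fun N => exp_series A N.+1 * exp_series (- A) N.+1) @ \oo
      --> (1 : 'M[R]_n.+1).
  rewrite (funext (fun N => exp_series_mulN A N)) -[X in _ --> X]addr0.
  apply: cvgD; first exact: cvg_cst.
  apply/norm_cvg0P; apply: (squeeze_cvgr _ (cvg_cst 0)
    (_ : (fun N => n.+1%:R * exp_remainder (bnd A) (bnd A) N.+1) @ \oo --> 0)).
    apply: nearW => N; rewrite normr_ge0 /=.
    by rewrite (le_trans (mx_norm_exp_remainder_le _ _ _)) // normrN.
  rewrite -(mulr0 (n.+1%:R : R)); apply: cvgM; first exact: cvg_cst.
  by rewrite cvg_shiftS; exact: exp_remainderR_cvg0.
apply/matrixP => i j; rewrite -mulmxE.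
apply: (cvg_unique (@Rhausdorff R) (cvg_mulmx_entry (i := i) (j := j)
  (cvg_exp_seriesS (A := A)) (cvg_exp_seriesS (A := - A)))).
exact: cvg_comp _ _ prod_cvg1 (@coord_continuous R _ _ i j 1).
Qed.

End MatrixExponential.

Section DiffSnd.
Variables (R : realType) (U V W : normedModType R).

Lemma snd_continuous : continuous (@snd U V).
Proof. by move=> [a b]; exact: cvg_snd. Qed.

Lemma diff_comp_snd (F : V -> W) (p q : U * V) : differentiable F p.2 ->
  'd (fun r : U * V => F r.2) p q = 'd F (p.2) q.2.
Proof.
move=> dF.
have dsnd : differentiable (@snd U V) p :=
  @linear_differentiable _ _ _ snd _ snd_continuous.
rewrite (_ : (fun r : U * V => F r.2) = F \o snd) // diff_comp //=.
by rewrite (@diff_lin _ _ _ snd _ snd_continuous).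
Qed.

End DiffSnd.

Lemma diff_Fprime (R : realType) d (F : 'cV[R]_d -> 'cV[R]_d) (x v : 'cV[R]_d) :
  'd F x v = Fprime F x *m v.
Proof.
apply/matrixP => i j.
rewrite (ord1 j) {1}[v]matrix_sum_delta linear_sum summxE mxE.
by apply: eq_bigr => k _; rewrite big_ord1 linearZ /= mxE mxE mulrC.
Qed.

Lemma exact_step_relationP (R : comUnitRingType) k (E E' : 'M[R]_k)
    (G u v : 'cV[R]_k) :
  E *m E' = 1%:M -> E' *m E = 1%:M ->
  (v - u = (1%:M - E') *m (G + v)) <-> (v = E *m u + (E - 1%:M) *m G).
Proof.
move=> EE' E'E; rewrite mulmxBl mul1mx.
have -> : (v - u = G + v - E' *m (G + v)) <-> (E' *m (G + v) = G + u).
  split=> H; [rewrite -[LHS](subKr (G + v)) -H | rewrite H].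
    by rewrite opprB addrA addrAC addrK.
  by rewrite opprD addrACA subrr add0r.
have -> : (v = E *m u + (E - 1%:M) *m G) <-> (G + v = E *m (G + u)).
  rewrite mulmxBl mul1mx mulmxDr; split=> H.
    by rewrite H addrCA addrC [G + _]addrC subrK.
  by rewrite addrA [E *m u + _]addrC -H addrC addKr.
by split=> H; [rewrite -H | rewrite H]; rewrite mulmxA ?EE' ?E'E mul1mx.
Qed.

Lemma mulmx_expmN (R : realType) d (A : 'M[R]_d) : expm A *m expm (- A) = 1%:M.
Proof. by case: d A => [|n] A; [rewrite !flatmx0 | rewrite mulmxE expm_mulN]. Qed.

Lemma locally_exact_at_delta_exp (R : realType) d (F : 'cV[R]_d -> 'cV[R]_d)
    xbar h :
  differentiable F xbar -> Fprime F xbar \in unitmx ->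
  locally_exact_at F (fun p => F p.2) (delta_exp F) xbar h.
Proof.
move=> dF J_unit xi xi'.
rewrite /lin_scheme /exact_disc /delta_exp diff_comp_snd // diff_Fprime.
set J := Fprime F xbar.
have -> : (1%:M - expm (- h *: J)) *m invmx J *m (F xbar + J *m xi') =
          (1%:M - expm (- h *: J)) *m (invmx J *m F xbar + xi').
  by rewrite -mulmxA mulmxDr mulmxA mulVmx // mul1mx.
rewrite -mulmxA; apply: exact_step_relationP.
  by rewrite scaleNr mulmx_expmN.
by rewrite scaleNr -{2}[h *: J]opprK mulmx_expmN.
Qed.

Theorem corollary4p2 (R : realType) (d : nat) (F : 'cV[R]_d -> 'cV[R]_d)
  (F_diff : forall x, differentiable F x)
  (h : nat -> R) (x1 x2 : nat -> 'cV[R]_d)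
  (scheme1 : forall n, x1 n.+1 = x1 n + delta_exp F (x1 n) (h n) *m F (x1 n.+1))
  (scheme2 : forall n, x2 n.+1 = x2 n + delta_exp F (x2 n.+1) (h n) *m F (x2 n.+1))
  (n : nat) :
  (Fprime F (x1 n) \in unitmx ->
     locally_exact_at F (fun p => F p.2) (delta_exp F) (x1 n) (h n)) /\
  (Fprime F (x2 n.+1) \in unitmx ->
     locally_exact_at F (fun p => F p.2) (delta_exp F) (x2 n.+1) (h n)).
Proof.
by split; apply: locally_exact_at_delta_exp.
Qed.
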